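(* A connected bipartite graph $H$ is equimatchable if and only if $V(H)$ admits a bipartition into two independent sets $U$ and $W$ such that every vertex of $U$ is strong in $H$.
   Context: A graph is equimatchable if all its maximal (inclusion-wise) matchings have the same size. A vertex $v$ of a graph $H$ is strong if every maximal matching of $H$ covers $v$. *)

From mathcomp Require Import all_boot.
Set Implicit Arguments. Unset Strict Implicit. Unset Printing Implicit Defensive.

Section Graph.
Variables (T : finType) (e : rel T).

Definition simple_graph : Prop := symmetric e /\ irreflexive e.

Definition is_edge (A : {set T}) : Prop := exists x y, e x y /\ A = [set x; y].

Definition matching (M : {set {set T}}) : Prop :=
  (forall A, A \in M -> is_edge A) /\
  (forall A B, A \in M -> B \in M -> A != B -> [disjoint A & B]).

Definition maximal_matching (M : {set {set T}}) : Prop :=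
  matching M /\ forall M', matching M' -> M \subset M' -> M' = M.

Definition equimatchable : Prop :=
  forall M1 M2, maximal_matching M1 -> maximal_matching M2 -> #|M1| = #|M2|.

Definition covers (M : {set {set T}}) (v : T) : Prop := exists2 A, A \in M & v \in A.

Definition strong (v : T) : Prop := forall M, maximal_matching M -> covers M v.

Definition independent (S : {set T}) : Prop :=
  forall x y, x \in S -> y \in S -> ~~ e x y.

Definition is_bipartition (U W : {set T}) : Prop :=
  U :|: W = [set: T] /\ U :&: W = set0 /\ independent U /\ independent W.

Definition bipartite : Prop := exists U W, is_bipartition U W.

Definition connected_graph : Prop := forall x y, connect e x y.

End Graph.

From mathcomp Require Import all_boot.
From Stdlib Require Import Classical.
Set Implicit Arguments. Unset Strict Implicit. Unset Printing Implicit Defensive.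

(* A matching of a bipartite graph covers exactly #|M| vertices of each side, so if every
   vertex of U is strong, every maximal matching has size #|U|.  Conversely, suppose the
   graph is equimatchable but some maximal matching misses a in U and some maximal matching
   misses a vertex of W; counting shows that the first one also misses some b in W.  Along
   a path a x1 x2 ... b we move the free vertex of U two steps at a time while keeping b
   free: exchanging at most two matched edges keeps the size, hence maximality, and when no
   exchange works, dropping the edges matching x1 and x2 and adding x1x2 yields a smaller
   maximal matching.  At the end of the path two adjacent vertices are free. *)

Section Matchings.
Variables (T : finType) (e : rel T).
Hypotheses (sym_e : symmetric e) (irr_e : irreflexive e).
Implicit Types (M N : {set {set T}}) (A : {set T}) (a b p q u v w x y z : T).

Lemma coversP M v : reflect (covers M v) (v \in cover M).
Proof. by apply: (iffP bigcupP) => -[A AM vA]; exists A. Qed.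

Lemma matching_trivIset M : matching e M -> trivIset M.
Proof. by case=> _ disjM; apply/trivIsetP => A B; apply: disjM. Qed.

Lemma matchingS M N : N \subset M -> matching e M -> matching e N.
Proof.
move=> /subsetP sNM [edgeM disjM].
by split=> [A /sNM | A B /sNM AM /sNM BM]; [apply: edgeM | apply: disjM].
Qed.

Lemma matching_partner M A v : matching e M -> A \in M -> v \in A ->
  exists2 w, e v w & A = [set v; w].
Proof.
case=> edgeM _ AM; have [x [y [exy ->]]] := edgeM _ AM.
by rewrite !inE => /orP[] /eqP->; [exists y | exists x; rewrite 1?sym_e // setUC].
Qed.

Lemma cover_setU1 A M : cover (A |: M) = A :|: cover M.
Proof. by rewrite /cover bigcup_setU big_set1. Qed.

Lemma notin_cover_setU1 M x y : x \notin cover M -> [set x; y] \notin M.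
Proof. by apply: contra => xyM; apply/bigcupP; exists [set x; y]; rewrite ?set21. Qed.

Lemma matching_setU1 M x y : matching e M -> e x y ->
  x \notin cover M -> y \notin cover M -> matching e ([set x; y] |: M).
Proof.
move=> [edgeM disjM] exy xM yM.
have disj_xy B : B \in M -> [disjoint [set x; y] & B].
  move=> BM; have sBM z : z \in B -> z \in cover M by move=> zB; apply/bigcupP; exists B.
  rewrite disjoints_subset subUset !sub1set !inE.
  by rewrite (contra (sBM x) xM) (contra (sBM y) yM).
split=> [A /setU1P[->|AM] | A B]; [by exists x, y | exact: edgeM |].
case/setU1P=> [->|AM] /setU1P[->|BM]; rewrite ?eqxx //.
- by move=> _; apply: disj_xy.
- by move=> _; rewrite disjoint_sym; apply: disj_xy.
- exact: disjM.
Qed.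

Lemma card_matching_setU1 M x y : x \notin cover M -> #|[set x; y] |: M| = #|M|.+1.
Proof. by move=> xM; rewrite cardsU1 notin_cover_setU1. Qed.

Lemma maximal_matchingP M : matching e M ->
  maximal_matching e M <-> forall x y, e x y -> (x \in cover M) || (y \in cover M).
Proof.
move=> matM; split=> [[_ maxM] x y exy | coverM].
  apply/negPn/negP; rewrite negb_or => /andP[xM yM].
  move/(congr1 (fun N => #|N|)): (maxM _ (matching_setU1 matM exy xM yM) (subsetUr _ _)).
  by rewrite card_matching_setU1 // => /esym/n_Sn.
split=> // N matN sMN; apply/eqP; rewrite eqEsubset sMN andbT; apply/subsetP => A AN.
have [x [y [exy defA]]] := matN.1 _ AN.
have [v vA /bigcupP[B BM vB]] : exists2 v, v \in A & v \in cover M.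
  by case/orP: (coverM _ _ exy) => ?; [exists x | exists y]; rewrite // defA !inE eqxx ?orbT.
have tiN := matching_trivIset matN.
by rewrite -(def_pblock tiN AN vA) (def_pblock tiN (subsetP sMN _ BM) vB).
Qed.

Lemma matching_extend M : matching e M -> exists2 N, maximal_matching e N & M \subset N.
Proof.
have [n] := ubnP #|~: M|; elim: n M => // n IH M ltMn matM.
have [maxM | nmaxM] := classic (maximal_matching e M); first by exists M.
have [N [matN sMN neqNM]] : exists N, [/\ matching e N, M \subset N & N <> M].
  apply: NNPP => noN; apply: nmaxM; split=> // N matN sMN.
  by apply: NNPP => neqNM; apply: noN; exists N.
have ltNM : #|~: N| < #|~: M|.
  by rewrite proper_card // properC properEneq sMN andbT eq_sym; apply/eqP.
have [P maxP sNP] := IH N (leq_trans ltNM ltMn) matN.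
by exists P; rewrite // (subset_trans sMN).
Qed.

Definition exchange M v w z := [set z; v] |: (M :\ [set v; w]).

Lemma cover_exchange M v w z : matching e M -> [set v; w] \in M -> e v w ->
  cover (exchange M v w z) = z |: (cover M :\ w).
Proof.
move=> matM vwM evw; have vM : v \in cover M by apply/bigcupP; exists [set v; w]; rewrite ?set21.
have vw : v != w by apply: contraTneq evw => ->; rewrite irr_e.
rewrite cover_setU1 coverD1 ?matching_trivIset //; apply/setP => x; rewrite !inE.
by case: (eqVneq x v) => [->|_]; rewrite ?vw ?vM ?orbT ?orbF.
Qed.

Section Equimatchable.
Hypothesis eqm : equimatchable e.

Lemma card_matching_le_maximal M N : maximal_matching e M -> matching e N -> #|N| <= #|M|.
Proof.
by move=> maxM /matching_extend[P maxP sNP]; rewrite (eqm maxM maxP) subset_leq_card.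
Qed.

Lemma maximal_matching_card M N :
  maximal_matching e M -> matching e N -> #|N| = #|M| -> maximal_matching e N.
Proof.
move=> maxM matN cardN; split=> // P matP sNP; apply/eqP.
by rewrite eq_sym eqEcard sNP cardN card_matching_le_maximal.
Qed.

Lemma maximal_matching_exchange M v w z : maximal_matching e M -> [set v; w] \in M ->
  e z v -> z \notin cover M -> maximal_matching e (exchange M v w z).
Proof.
move=> maxM vwM ezv zM; have matM := maxM.1.
have coverD := coverD1 (matching_trivIset matM) vwM.
have zMD : z \notin cover (M :\ [set v; w]) by rewrite coverD inE (negbTE zM) andbF.
apply: maximal_matching_card maxM _ _; last first.
  by rewrite card_matching_setU1 // (cardsD1 [set v; w] M) vwM.
apply: matching_setU1 => //; first by apply: matchingS matM; apply: subD1set.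
by rewrite coverD !inE eqxx.
Qed.

Lemma linked_matched_edges M x1 p x2 q : maximal_matching e M ->
  [set x1; p] \in M -> [set x2; q] \in M -> [set x1; p] != [set x2; q] -> e x1 x2 ->
  exists y z, [/\ e y z, y \in [set p; q] :|: ~: cover M & z \in [set p; q] :|: ~: cover M].
Proof.
move=> maxM E1M E2M E12 e12; have matM := maxM.1.
have E2M1 : [set x2; q] \in M :\ [set x1; p] by rewrite !inE eq_sym E12.
set M0 := M :\ [set x1; p] :\ [set x2; q].
have matM0 : matching e M0.
  by apply: matchingS matM; apply: subset_trans (subD1set _ _) (subD1set _ _).
have coverM0 : cover M0 = cover M :\: [set x1; p] :\: [set x2; q].
  by rewrite !coverD1 ?matching_trivIset //; apply: matchingS matM; apply: subD1set.
have cardM : #|M| = #|M0|.+2.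
  by rewrite (cardsD1 [set x1; p] M) E1M (cardsD1 [set x2; q] (M :\ _)) E2M1.
have x1M0 : x1 \notin cover M0 by rewrite coverM0 !inE eqxx /= andbF.
have x2M0 : x2 \notin cover M0 by rewrite coverM0 !inE eqxx.
apply: NNPP => noEdge.
have maxM' : maximal_matching e ([set x1; x2] |: M0).
  apply/(maximal_matchingP (matching_setU1 matM0 e12 x1M0 x2M0)) => y z eyz.
  have outside v : v \notin cover ([set x1; x2] |: M0) -> v \in [set p; q] :|: ~: cover M.
    rewrite cover_setU1 coverM0 !inE.
    by case: (v == x1) (v == x2) (v == p) (v == q) (v \in cover M) => [] [] [] [] [].
  apply/negPn/negP; rewrite negb_or => /andP[/outside yPQ /outside zPQ].
  by apply: noEdge; exists y, z.
by have := eqm maxM maxM'; rewrite card_matching_setU1 // cardM => /succn_inj/esym/n_Sn.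
Qed.

End Equimatchable.

Section Bipartite.
Variables U W : {set T}.
Hypothesis bipUW : is_bipartition e U W.

Lemma bipartition_setC : W = ~: U.
Proof.
case: bipUW => /setP UW [/setP UW0 _]; apply/setP => v; move: (UW v) (UW0 v); rewrite !inE.
by case: (v \in U) (v \in W).
Qed.

Lemma bipartition_edge x y : e x y -> (y \in U) = (x \notin U).
Proof.
case: bipUW => _ [_ [indU indW]]; rewrite bipartition_setC in indW.
move=> exy; case xU: (x \in U); case yU: (y \in U) => //.
  by move: (indU _ _ xU yU); rewrite exy.
by move: (indW x y); rewrite !inE xU yU exy => /(_ isT isT).
Qed.

Lemma bipartition_path2 x y z : e x y -> e y z -> (z \in U) = (x \in U).
Proof. by move=> exy eyz; rewrite (bipartition_edge eyz) (bipartition_edge exy) negbK. Qed.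

Lemma card_cover_bipartition M : matching e M -> #|U :&: cover M| = #|M|.
Proof.
move=> matM; have tiM := matching_trivIset matM.
have pblockUM : pblock M @: (U :&: cover M) = M.
  apply/setP => A; apply/imsetP/idP => [[v /setIP[_ vM] ->] | AM]; first exact: pblock_mem.
  have [x [y [exy defA]]] := matM.1 _ AM.
  have [v vA vU] : exists2 v, v \in A & v \in U.
    case xU: (x \in U); [exists x | exists y]; rewrite // ?defA ?inE ?eqxx ?orbT //.
    by rewrite (bipartition_edge exy) xU.
  exists v; last by rewrite (def_pblock tiM AM vA).
  by rewrite inE vU; apply/bigcupP; exists A.
rewrite -[in RHS]pblockUM card_in_imset // => v w /setIP[vU vM] /setIP[wU wM] eq_vw.
apply/eqP; apply: contraT => neq_vw.
have vA : v \in pblock M v by rewrite mem_pblock.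
have [v' evv' defA] := matching_partner matM (pblock_mem vM) vA.
have : w \in pblock M v by rewrite eq_vw mem_pblock.
rewrite defA !inE eq_sym (negbTE neq_vw) /= => /eqP wv'.
by move: (bipartition_edge evv'); rewrite -wv' wU vU.
Qed.

Lemma card_maximal_matching_strong M :
  (forall u, u \in U -> strong e u) -> maximal_matching e M -> #|M| = #|U|.
Proof.
move=> strongU maxM; rewrite -(card_cover_bipartition maxM.1).
suff /setIidPl -> : U \subset cover M by [].
by apply/subsetP => u /strongU /(_ M maxM) /coversP.
Qed.

Hypothesis eqm : equimatchable e.

Lemma exists_uncovered_side M N w : maximal_matching e M -> maximal_matching e N ->
  w \in U -> w \notin cover M -> exists2 b, b \in U & b \notin cover N.
Proof.
move=> maxM maxN wU wM; apply/subsetPn/negP => /setIidPl UN.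
have : #|U :&: cover M| < #|U|.
  rewrite proper_card // properE subsetIl; apply/subsetPn.
  by exists w; rewrite // inE (negbTE wM) andbF.
by rewrite (card_cover_bipartition maxM.1) (eqm maxM maxN) -(card_cover_bipartition maxN.1) UN ltnn.
Qed.

Lemma maximal_matching_exchange_uncovered M v w z b : maximal_matching e M ->
  [set v; w] \in M -> e v w -> e z v -> z \in U -> z \notin cover M ->
  b \in W -> b \notin cover M ->
  exists2 N, maximal_matching e N & (w \notin cover N) && (b \notin cover N).
Proof.
move=> maxM vwM evw ezv zU zM; rewrite bipartition_setC inE => bU bM.
exists (exchange M v w z); first exact: maximal_matching_exchange.
have wM : w \in cover M by apply/bigcupP; exists [set v; w]; rewrite ?set22.
have wz : w != z by apply: contraNneq zM => <-.
have bz : b != z by apply: contraNneq bU => ->.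
rewrite cover_exchange //; last exact: maxM.1.
by rewrite !inE eqxx orbF (negbTE wz) (negbTE bz) (negbTE bM) andbF.
Qed.

Lemma linked_matched_edges_bipartite M x1 p x2 q : maximal_matching e M ->
  [set x1; p] \in M -> [set x2; q] \in M -> [set x1; p] != [set x2; q] -> e x1 x2 ->
  p \in U -> q \notin U ->
  exists y z, [/\ e y z, (y == p) || (y \notin cover M) & (z == q) || (z \notin cover M)].
Proof.
move=> maxM E1M E2M E12 e12 pU qU.
have [y [z [eyz yPQ zPQ]]] := linked_matched_edges eqm maxM E1M E2M E12 e12.
have sideU v : v \in U -> v \in [set p; q] :|: ~: cover M -> (v == p) || (v \notin cover M).
  by move=> vU; rewrite !inE -orbA => /or3P[->|/eqP vq|->]; rewrite ?orbT //; rewrite -vq vU in qU.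
have sideW v : v \notin U -> v \in [set p; q] :|: ~: cover M -> (v == q) || (v \notin cover M).
  by move=> vU; rewrite !inE -orbA => /or3P[/eqP vp|->|->]; rewrite ?orbT //; rewrite vp pU in vU.
have [yU|yU] := boolP (y \in U).
  by exists y, z; split; rewrite // ?sideU ?sideW // (bipartition_edge eyz) yU.
by exists z, y; split; rewrite 1?sym_e // ?sideU ?sideW // (bipartition_edge eyz).
Qed.

Lemma maximal_matching_shift M a x1 x2 b : maximal_matching e M -> e a x1 -> e x1 x2 ->
  a \in U -> b \in W -> a \notin cover M -> b \notin cover M ->
  exists2 N, maximal_matching e N & (x2 \notin cover N) && (b \notin cover N).
Proof.
move=> maxM ea1 e12 aU bW aM bM; have matM := maxM.1.
have x1U : x1 \notin U by rewrite (bipartition_edge ea1) aU.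
have x2U : x2 \in U by rewrite (bipartition_path2 ea1 e12).
have [x2M|x2M] := boolP (x2 \in cover M); last by exists M; rewrite ?x2M ?bM.
have x1M : x1 \in cover M by have := (maximal_matchingP matM).1 maxM _ _ ea1; rewrite (negbTE aM).
have [E1 E1M /(matching_partner matM E1M)[p e1p defE1]] := bigcupP x1M.
have [E2 E2M /(matching_partner matM E2M)[q e2q defE2]] := bigcupP x2M.
subst E1 E2.
have q2M : [set q; x2] \in M by rewrite setUC.
have pU : p \in U by rewrite (bipartition_edge e1p) x1U.
have qU : q \notin U by rewrite (bipartition_edge e2q) x2U.
have [<-|px2] := eqVneq p x2.
  exact: maximal_matching_exchange_uncovered E1M e1p ea1 aU aM bW bM.
set M1 := exchange M x1 p a.
have maxM1 : maximal_matching e M1 := maximal_matching_exchange eqm maxM E1M ea1 aM.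
have coverM1 : cover M1 = a |: (cover M :\ p) by rewrite cover_exchange.
have pM1 : p \notin cover M1.
  rewrite coverM1 !inE eqxx orbF; apply: contraNneq aM => <-.
  by apply/bigcupP; exists [set x1; p]; rewrite ?set22.
have bM1 : b \notin cover M1.
  rewrite coverM1 !inE (negbTE bM) andbF orbF; apply: contraTneq bW => ->.
  by rewrite bipartition_setC inE aU.
have E12 : [set x1; p] != [set x2; q].
  apply: contraNneq px2 => E12; move: (set21 x2 q); rewrite -E12 !inE => /orP[/eqP x21|/eqP ->] //.
  by rewrite -x21 x2U in x1U.
have [y [z [eyz /orP[/eqP yp|yM] /orP[/eqP zq|zM]]]] :=
  linked_matched_edges_bipartite maxM E1M E2M E12 e12 pU qU.
- have q2M1 : [set q; x2] \in M1.
    by rewrite /M1 /exchange !inE q2M andbT [[set q; x2]]setUC (eq_sym _ [set x1; p]) E12 orbT.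
  have epq : e p q by rewrite -yp -zq.
  by apply: maximal_matching_exchange_uncovered maxM1 q2M1 _ epq pU pM1 bW bM1; rewrite sym_e.
- (* [z] is free in [M] and [p] is free in [M1], so maximality of [M1] forces [z = a]. *)
  have := (maximal_matchingP maxM1.1).1 maxM1 _ _ eyz.
  rewrite yp (negbTE pM1) coverM1 !inE (negbTE zM) andbF orbF => /eqP za.
  by move: (bipartition_edge eyz); rewrite yp pU za aU.
- have yU : y \in U by move: qU; rewrite -zq (bipartition_edge eyz) negbK.
  have eyq : e y q by rewrite -zq.
  by apply: maximal_matching_exchange_uncovered maxM q2M _ eyq yU yM bW bM; rewrite sym_e.
- by move: ((maximal_matchingP matM).1 maxM _ _ eyz); rewrite (negbTE yM) (negbTE zM).
Qed.

Lemma maximal_matching_path M a s : maximal_matching e M -> path e a s ->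
  a \in U -> last a s \in W -> (a \in cover M) || (last a s \in cover M).
Proof.
have [n] := ubnP (size s); elim: n s M a => // n IH [|x1 [|x2 s]] M a /= size_s maxM.
- by move=> _ aU; rewrite bipartition_setC inE aU.
- by rewrite andbT => ea1 _ _; apply: (maximal_matchingP maxM.1).1 maxM _ _ ea1.
case/and3P=> ea1 e12 path_s aU bW; apply/negPn/negP; rewrite negb_or => /andP[aM bM].
have [N maxN /andP[x2N bN]] := maximal_matching_shift maxM ea1 e12 aU bW aM bM.
have x2U : x2 \in U by rewrite (bipartition_path2 ea1 e12).
by have := IH s N x2 (ltnW size_s) maxN path_s x2U bW; rewrite (negbTE x2N) (negbTE bN).
Qed.

End Bipartite.

End Matchings.

Lemma bipartition_sym (T : finType) (e : rel T) U W :
  is_bipartition e U W -> is_bipartition e W U.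
Proof. by case=> UW [UW0 [indU indW]]; rewrite /is_bipartition setUC setIC. Qed.

Lemma not_all_strong (T : finType) (e : rel T) (S : {set T}) :
  ~ (forall v, v \in S -> strong e v) ->
  exists v M, [/\ v \in S, maximal_matching e M & v \notin cover M].
Proof.
move=> notStrong; apply: NNPP => noUncovered; apply: notStrong => v vS M maxM.
apply/coversP/negPn/negP => vM; by apply: noUncovered; exists v, M.
Qed.

Theorem mainTheorem13 (T : finType) (e : rel T) :
  simple_graph e -> connected_graph e -> bipartite e ->
  (equimatchable e <->
   exists U W : {set T}, is_bipartition e U W /\ (forall u, u \in U -> strong e u)).
Proof.
move=> [sym_e irr_e] conn [U [W bipUW]]; split=> [eqm | [U' [W' [bipU'W' strongU']]]].
  have [strongU | /not_all_strong[a [M1 [aU maxM1 aM1]]]] :=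
    classic (forall u, u \in U -> strong e u); first by exists U, W.
  have [strongW | /not_all_strong[w [M2 [wW maxM2 wM2]]]] :=
    classic (forall w, w \in W -> strong e w).
    by exists W, U; split; first exact: bipartition_sym.
  have [b bW bM1] :=
    exists_uncovered_side sym_e (bipartition_sym bipUW) eqm maxM2 maxM1 wW wM2.
  case/connectP: (conn a b) => s path_s def_b; rewrite def_b in bW bM1.
  have := maximal_matching_path sym_e irr_e bipUW eqm maxM1 path_s aU bW.
  by rewrite (negbTE aM1) (negbTE bM1).
by move=> M1 M2 maxM1 maxM2; rewrite !(card_maximal_matching_strong sym_e bipU'W' strongU').
Qed.
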